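(* Let $E=\{E_{\bar a}:\bar a\in[\lambda]^{<\omega}\}$ be a system of $\kappa$-complete ultrafilters, $E_{\bar a}$ on ${}^{\bar a}\kappa$, satisfying coherence. The following are equivalent: (1) $E$ is well-founded. (2) Łoś' Theorem holds for $\mathbb{L}_{\kappa,\omega}(Q^{WF})$-formulas: for every $\bar a\in[\lambda]^{<\omega}$, every family of $\tau$-structures $\{M_s:s\in{}^{\bar a}\kappa\}$, every $\phi(x_1,\dots,x_n)\in\mathbb{L}_{\kappa,\omega}(Q^{WF})(\tau)$ and all $[\bar b_1,f_1]_E,\dots,[\bar b_n,f_n]_E\in\prod M_s/E$, we have $\prod M_s/E\models\phi([\bar b_1,f_1]_E,\dots,[\bar b_n,f_n]_E)$ iff $\{s\in{}^{\bigcup_i\bar b_i}\kappa: M_{s\restriction\bar a}\models\phi(f_1(s\restriction\bar b_1),\dots,f_n(s\restriction\bar b_n))\}\in E_{\bigcup_i\bar b_i}$.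
   Context: Coherence: for $\bar a\subseteq\bar b$, $X\in E_{\bar a}$ iff $\{s\in{}^{\bar b}\kappa: s\restriction\bar a\in X\}\in E_{\bar b}$. Well-foundedness: for any countably many $\bar a_n\in[\lambda]^{<\omega}$ and $X_n\in E_{\bar a_n}$ there is $h:\bigcup_n\bar a_n\to\kappa$ with $h\restriction\bar a_n\in X_n$ for all $n$. Extender product: given $\bar a$ and $\tau$-structures $M_s$ ($s\in{}^{\bar a}\kappa$), $\prod M_s/E$ is the direct limit of the ultraproducts $\prod_{s\in{}^{\bar b}\kappa}M_{s\restriction\bar a}/E_{\bar b}$ ($\bar a\subseteq\bar b\in[\lambda]^{<\omega}$) under the maps induced by restriction; its elements are classes $[\bar b,f]_E$ with $\bar a\subseteq\bar b$ and $f$ a function on ${}^{\bar b}\kappa$ with $f(s)\in M_{s\restriction\bar a}$, where $[\bar b,f]_E=[\bar c,g]_E$ iff $\{s\in{}^{\bar b\cup\bar c}\kappa:f(s\restriction\bar b)=g(s\restriction\bar c)\}\in E_{\bar b\cup\bar c}$ (relations defined similarly). $\mathbb{L}_{\kappa,\omega}(Q^{WF})$ is $\mathbb{L}_{\kappa,\omega}$ with the quantifier $Q^{WF}$: $Q^{WF}xy\,\phi(x,y,\bar z)$ holds iff there is no sequence $(x_n)_{n<\omega}$ with $\phi(x_{n+1},x_n,\bar z)$ for all $n$. *)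

From mathcomp Require Import all_boot.
From mathcomp Require Import finmap.
From Stdlib Require Import ClassicalEpsilon.

Set Implicit Arguments.
Unset Strict Implicit.
Unset Printing Implicit Defensive.

Local Open Scope fset_scope.

Definition card_lt (I K : Type) : Prop :=
  (exists f : I -> K, injective f) /\ ~ (exists g : K -> I, injective g).

(* kappa-complete ultrafilters on a type T; kappa is (the cardinality  *)
(* of) the type K.  A filter is a collection of subsets (T -> Prop).   *)
Definition kcomplete_ultrafilter (K T : Type) (U : (T -> Prop) -> Prop) : Prop :=
  U (fun _ => True) /\
  ~ U (fun _ => False) /\
  (forall X Y : T -> Prop, U X -> (forall t, X t -> Y t) -> U Y) /\
  (forall X Y : T -> Prop, U X -> U Y -> U (fun t => X t /\ Y t)) /\
  (forall (I : Type) (X : I -> T -> Prop), card_lt I K ->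
      (forall i, U (X i)) -> U (fun t => forall i, X i t)) /\
  (forall X : T -> Prop, U X \/ U (fun t => ~ X t)).

(* Finite subsets abar of lambda (= the type L) and the sets ^abar kappa *)
(* (= {ffun abar -> K}); restriction s |` abar for abar <= bbar.       *)
Definition restr (L : choiceType) (K : Type) (a b : {fset L}) (H : a `<=` b)
  (s : {ffun b -> K}) : {ffun a -> K} := [ffun x : a => s (fincl H x)].

Lemma restr_trans (L : choiceType) (K : Type) (a b c : {fset L})
  (Hab : a `<=` b) (Hbc : b `<=` c) (Hac : a `<=` c) (s : {ffun c -> K}) :
  restr Hab (restr Hbc s) = restr Hac s.
Proof.
apply/ffunP=> x; rewrite !ffunE; congr (s _); exact: val_inj.
Qed.

Definition extender_system (L : choiceType) (K : Type) :=
  forall a : {fset L}, ({ffun a -> K} -> Prop) -> Prop.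

Definition coherent (L : choiceType) (K : Type) (E : extender_system L K) : Prop :=
  forall (a b : {fset L}) (H : a `<=` b) (X : {ffun a -> K} -> Prop),
    E a X <-> E b (fun s => X (restr H s)).

Definition restr_dom (L : choiceType) (K : Type) (A : nat -> {fset L}) (n : nat)
  (h : {x : L | exists m, x \in A m} -> K) : {ffun A n -> K} :=
  [ffun x : A n => h (exist _ (val x) (ex_intro _ n (valP x)))].

Definition well_founded_ext (L : choiceType) (K : Type) (E : extender_system L K) : Prop :=
  forall (A : nat -> {fset L}) (X : forall n, {ffun A n -> K} -> Prop),
    (forall n, E (A n) (X n)) ->
    exists h : {x : L | exists m, x \in A m} -> K, forall n, X n (restr_dom n h).

(* Vocabularies tau: function symbols F (arity far) and relation        *)
(* symbols R (arity rar); constants are 0-ary function symbols.         *)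
Record structure (F : Type) (far : F -> nat) (R : Type) (rar : R -> nat) := Structure {
  carrier :> Type;
  funs : forall f : F, ('I_(far f) -> carrier) -> carrier;
  rels : forall r : R, ('I_(rar r) -> carrier) -> Prop }.
Arguments carrier {F far R rar} s.
Arguments funs {F far R rar} s f _.
Arguments rels {F far R rar} s r _.

Inductive term (F : Type) (far : F -> nat) (n : nat) : Type :=
| Var : 'I_n -> term far n
| App : forall f : F, ('I_(far f) -> term far n) -> term far n.

(* Formulas of L_{kappa,omega}(Q^WF)(tau) with free variables among the *)
(* n variables 'I_n (formula phi(x_1,...,x_n)).                          *)
Inductive form (K : Type) (F : Type) (far : F -> nat) (R : Type) (rar : R -> nat)
  : nat -> Type :=
| FEq : forall n, term far n -> term far n -> form K far rar n
| FRel : forall n (r : R), ('I_(rar r) -> term far n) -> form K far rar n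
| FNeg : forall n, form K far rar n -> form K far rar n
| FAnd : forall n (I : Type), card_lt I K -> (I -> form K far rar n) -> form K far rar n
| FEx : forall n, form K far rar n.+1 -> form K far rar n
(* FQWF phi with phi(x, y, zbar): x is variable 0, y is variable 1.   *)
| FQWF : forall n, form K far rar n.+2 -> form K far rar n.

Definition scons (T : Type) (n : nat) (x : T) (v : 'I_n -> T) : 'I_n.+1 -> T :=
  fun i => match unlift ord0 i with Some j => v j | None => x end.

Fixpoint eval_term (F : Type) (far : F -> nat) (R : Type) (rar : R -> nat)
  (M : structure far rar) (n : nat) (v : 'I_n -> M) (t : term far n) : M :=
  match t with
  | @Var _ _ _ i => v i
  | @App _ _ _ f ts => funs M f (fun j => eval_term v (ts j))
  end.

Fixpoint sat (K : Type) (F : Type) (far : F -> nat) (R : Type) (rar : R -> nat)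
  (M : structure far rar) (n : nat) (phi : form K far rar n) : ('I_n -> M) -> Prop :=
  match phi in form _ _ _ m return ('I_m -> M) -> Prop with
  | @FEq _ _ _ _ _ _ t1 t2 => fun v => eval_term v t1 = eval_term v t2
  | @FRel _ _ _ _ _ _ r ts => fun v => rels M r (fun j => eval_term v (ts j))
  | @FNeg _ _ _ _ _ _ psi => fun v => ~ sat psi v
  | @FAnd _ _ _ _ _ _ J _ ps => fun v => forall i, sat (ps i) v
  | @FEx _ _ _ _ _ _ psi => fun v => exists x : M, sat psi (scons x v)
  | @FQWF _ _ _ _ _ _ psi => fun v =>
      ~ exists xs : nat -> M, forall k, sat psi (scons (xs k.+1) (scons (xs k) v))
  end.

Lemma sub_Ul (L : choiceType) (a b c : {fset L}) : a `<=` b -> a `<=` b `|` c.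
Proof. by move=> H; apply: fsubset_trans H (fsubsetUl _ _). Qed.

Lemma sub_big (L : choiceType) (a : {fset L}) (n : nat) (b : 'I_n -> {fset L})
  (j : 'I_n) : b j `<=` a `|` \bigcup_(i | true) b i.
Proof.
apply: fsubset_trans (fsubsetUr _ _).
by rewrite (bigfcup_sup (j := j)) // mem_index_enum.
Qed.

Record rep (L : choiceType) (K : Type) (F : Type) (far : F -> nat) (R : Type)
  (rar : R -> nat) (a : {fset L}) (M : {ffun a -> K} -> structure far rar) := Rep {
  rb : {fset L};
  rsub : a `<=` rb;
  rf : forall s : {ffun rb -> K}, M (restr rsub s) }.
Arguments rb {L K F far R rar a M} r.
Arguments rsub {L K F far R rar a M} r.
Arguments rf {L K F far R rar a M} r s.

(* The value f(s|bbar) in M_{s|abar}, for s in ^cbar kappa with bbar <= cbar. *)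
Definition rep_at (L : choiceType) (K : Type) (F : Type) (far : F -> nat) (R : Type)
  (rar : R -> nat) (a : {fset L}) (M : {ffun a -> K} -> structure far rar)
  (p : rep M) (c : {fset L}) (Hpc : rb p `<=` c) (Hac : a `<=` c)
  (s : {ffun c -> K}) : M (restr Hac s) :=
  eq_rect _ (fun t => carrier (M t)) (rf p (restr Hpc s)) _
    (restr_trans (rsub p) Hpc Hac s).

Definition rep_eq (L : choiceType) (K : Type) (E : extender_system L K)
  (F : Type) (far : F -> nat) (R : Type) (rar : R -> nat) (a : {fset L})
  (M : {ffun a -> K} -> structure far rar) (p q : rep M) : Prop :=
  E (rb p `|` rb q)
    (fun s => rep_at (fsubsetUl (rb p) (rb q)) (sub_Ul (rb q) (rsub p)) s
            = rep_at (fsubsetUr (rb p) (rb q)) (sub_Ul (rb q) (rsub p)) s).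

Definition ultra_car (L : choiceType) (K : Type) (E : extender_system L K)
  (F : Type) (far : F -> nat) (R : Type) (rar : R -> nat) (a : {fset L})
  (M : {ffun a -> K} -> structure far rar) : Type :=
  {C : rep M -> Prop | exists p, C = rep_eq E p}.

Definition cls (L : choiceType) (K : Type) (E : extender_system L K)
  (F : Type) (far : F -> nat) (R : Type) (rar : R -> nat) (a : {fset L})
  (M : {ffun a -> K} -> structure far rar) (p : rep M) : ultra_car E M :=
  exist _ (rep_eq E p) (ex_intro _ p erefl).

Definition crepr (L : choiceType) (K : Type) (E : extender_system L K)
  (F : Type) (far : F -> nat) (R : Type) (rar : R -> nat) (a : {fset L})
  (M : {ffun a -> K} -> structure far rar) (C : ultra_car E M) : rep M :=
  proj1_sig (constructive_indefinite_description _ (proj2_sig C)).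

Definition big_dom (L : choiceType) (K : Type) (F : Type) (far : F -> nat) (R : Type)
  (rar : R -> nat) (a : {fset L}) (M : {ffun a -> K} -> structure far rar)
  (n : nat) (ps : 'I_n -> rep M) : {fset L} :=
  a `|` \bigcup_(i | true) rb (ps i).

Definition ultraprod (L : choiceType) (K : Type) (E : extender_system L K)
  (F : Type) (far : F -> nat) (R : Type) (rar : R -> nat) (a : {fset L})
  (M : {ffun a -> K} -> structure far rar) : structure far rar :=
  @Structure F far R rar (ultra_car E M)
    (fun f cs =>
       let ps := fun j => crepr (cs j) in
       cls E (@Rep L K F far R rar a M (big_dom ps) (fsubsetUl _ _)
         (fun s => funs (M (restr (fsubsetUl _ _) s)) f
            (fun j => rep_at (sub_big a (fun i => rb (ps i)) j) (fsubsetUl _ _) s))))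
    (fun r cs =>
       let ps := fun j => crepr (cs j) in
       E (big_dom ps)
         (fun s => rels (M (restr (fsubsetUl _ _) s)) r
            (fun j => rep_at (sub_big a (fun i => rb (ps i)) j) (fsubsetUl _ _) s))).

Definition los_property (L : choiceType) (K : Type) (E : extender_system L K) : Prop :=
  forall (F : Type) (far : F -> nat) (R : Type) (rar : R -> nat) (a : {fset L})
    (M : {ffun a -> K} -> structure far rar),
    (forall s, inhabited (carrier (M s))) ->
    forall (n : nat) (phi : form K far rar n) (ps : 'I_n -> rep M),
      sat (M := ultraprod E M) phi (fun i => cls E (ps i)) <->
      E (big_dom ps)
        (fun s => sat (M := M (restr (fsubsetUl _ _) s)) phi
           (fun i => rep_at (sub_big a (fun j => rb (ps j)) i) (fsubsetUl _ _) s)).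

(* By coherence,
   whether a property of finitely many representatives holds E-almost everywhere
   does not depend on the finite support on which it is evaluated, so the
   first-order cases go through as usual, conjunctions of fewer than κ formulas
   by κ-completeness.  For Q^WF, a descending sequence [b_k, f_k] in the product
   gives, for each k, a measure-one set on which f_(k+1) and f_k are related;
   well-foundedness yields one h meeting all these sets, and along h the f_k
   form a descending sequence in a single factor.
   (2) -> (1): given X_n in E_(a_n), the finite approximations
   t : a_0 ∪ ... ∪ a_(n-1) -> κ with t|a_m in X_m for all m < n, ordered by
   extension, form a tree.  In the extender power of this tree the identity
   maps of the successive stages descend, because almost every s is an
   approximation; by Łoś the tree is ill-founded, and an infinite branch glues
   to the required h. *)

From mathcomp Require Import all_boot.
From mathcomp Require Import finmap.
From Stdlib Require Import ClassicalEpsilon Classical ProofIrrelevance.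
From Stdlib Require Import FunctionalExtensionality PropExtensionality.

Set Implicit Arguments.
Unset Strict Implicit.
Unset Printing Implicit Defensive.
Local Open Scope fset_scope.

Section KCompleteUltrafilter.
Variables (K T : Type) (U : (T -> Prop) -> Prop).
Hypothesis HU : kcomplete_ultrafilter K U.

Lemma uf_setT : U (fun _ => True).
Proof. by case: HU. Qed.

Lemma uf_mono X Y : U X -> (forall t, X t -> Y t) -> U Y.
Proof. by case: HU => _ [_ [H _]]; apply: H. Qed.

Lemma uf_and X Y : U X -> U Y -> U (fun t => X t /\ Y t).
Proof. by case: HU => _ [_ [_ [H _]]]; apply: H. Qed.

Lemma uf_ae_iff Z X Y : U Z -> (forall t, Z t -> (X t <-> Y t)) -> U X <-> U Y.
Proof.
by move=> HZ H; split=> HX; apply: uf_mono (uf_and HZ HX) _ => t [/H [? ?]]; auto.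
Qed.

Lemma uf_not X : U (fun t => ~ X t) <-> ~ U X.
Proof.
split=> [HN HX | HX].
  by case: HU => _ [H0 _]; apply: H0; apply: uf_mono (uf_and HX HN) _ => t [].
by case: HU => _ [_ [_ [_ [_ H]]]]; case: (H X).
Qed.

Lemma uf_const (Q : Prop) : U (fun _ => Q) -> Q.
Proof.
move=> HQ; apply: NNPP => nQ; apply/(uf_not (fun _ => Q)): HQ.
by apply: uf_mono uf_setT _.
Qed.

Lemma uf_forall_fin (I : finType) (X : I -> T -> Prop) :
  (forall i, U (X i)) -> U (fun t => forall i, X i t).
Proof.
move=> HX; suff: U (fun t => forall i, i \in enum I -> X i t).
  by move/uf_mono; apply=> t H i; apply: H; rewrite mem_enum.
elim: (enum I) => [|i s IH]; first by apply: uf_mono uf_setT _ => t _ i.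
apply: uf_mono (uf_and (HX i) IH) _ => t [Hi Hs] j.
by rewrite in_cons => /predU1P [-> | /Hs].
Qed.

Lemma uf_forall (I : Type) (X : I -> T -> Prop) : card_lt I K ->
  (forall i, U (X i)) -> U (fun t => forall i, X i t).
Proof. by case: HU => _ [_ [_ [_ [H _]]]]; apply: H. Qed.

End KCompleteUltrafilter.

Section Transport.
Variables (T : Type) (P : T -> Type).

Lemma eq_rect_fun_iff (J : Type) (Phi : forall t, (J -> P t) -> Prop) t t'
  (e : t = t') (v : J -> P t) :
  Phi t' (fun j => eq_rect t P (v j) t' e) <-> Phi t v.
Proof. by case: t' / e. Qed.

Lemma eq_rect_fun_op (J : Type) (op : forall t, (J -> P t) -> P t) t t'
  (e : t = t') (v : J -> P t) :
  eq_rect t P (op t v) t' e = op t' (fun j => eq_rect t P (v j) t' e).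
Proof. by case: t' / e. Qed.

Lemma eq_rect_comp t1 t2 t3 (e12 : t1 = t2) (e23 : t2 = t3) (e13 : t1 = t3)
  (x : P t1) :
  eq_rect t2 P (eq_rect t1 P x t2 e12) t3 e23 = eq_rect t1 P x t3 e13.
Proof.
case: t2 / e12 e23 => e23; case: t3 / e23 e13 => e13.
by rewrite (proof_irrelevance _ e13 erefl).
Qed.

End Transport.

Lemma scons_map (T1 T2 : Type) n (g : T1 -> T2) x (v : 'I_n -> T1) :
  (fun i => g (scons x v i)) = scons (g x) (fun i => g (v i)).
Proof. by apply: functional_extensionality => i; rewrite /scons; case: unlift. Qed.

Lemma scons0 (T : Type) n (x : T) (v : 'I_n -> T) : scons x v ord0 = x.
Proof. by rewrite /scons unlift_none. Qed.

Lemma sconsS (T : Type) n (x : T) (v : 'I_n -> T) j : scons x v (lift ord0 j) = v j.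
Proof. by rewrite /scons liftK. Qed.

Definition chain_for (T : Type) n (phi : ('I_n.+2 -> T) -> Prop) (z : 'I_n -> T)
  (xs : nat -> T) : Prop :=
  forall k, phi (scons (xs k.+1) (scons (xs k) z)).

Lemma restr_id (L : choiceType) (K : Type) (c : {fset L}) (H : c `<=` c)
  (s : {ffun c -> K}) : restr H s = s.
Proof. by apply/ffunP => x; rewrite ffunE; congr (s _); apply: val_inj. Qed.

Lemma restr_dom_restr (L : choiceType) (K : Type) (A : nat -> {fset L})
  (h : {x : L | exists m, x \in A m} -> K) (d : {fset L}) n m
  (Hn : d `<=` A n) (Hm : d `<=` A m) :
  restr Hn (restr_dom n h) = restr Hm (restr_dom m h).
Proof.
apply/ffunP => x; rewrite !ffunE; congr h.
exact: eq_sig_hprop (fun x => proof_irrelevance _) _ _ _.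
Qed.

Section ExtenderProduct.
Unset Implicit Arguments.
Variables (L : choiceType) (K : Type) (E : extender_system L K).
Set Implicit Arguments.
Hypothesis HE : forall b : {fset L}, kcomplete_ultrafilter K (E b).
Hypothesis Hcoh : coherent E.
Variables (F : Type) (far : F -> nat) (R : Type) (rar : R -> nat) (a : {fset L})
  (M : {ffun a -> K} -> structure far rar).

Local Notation P := (fun t : {ffun a -> K} => carrier (M t)).
Local Notation UP := (ultraprod E M).

Lemma rf_cast (p : rep M) (u u' : {ffun rb p -> K}) t t'
  (e : restr (rsub p) u = t) (e' : restr (rsub p) u' = t') (ett : t = t') :
  u = u' -> eq_rect t P (eq_rect _ P (rf p u) t e) t' ett = eq_rect _ P (rf p u') t' e'.
Proof. by move=> eu; subst u'; apply: (eq_rect_comp e ett e'). Qed.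

Lemma rep_at_restr (p : rep M) c c' (Hpc : rb p `<=` c) (Hac : a `<=` c)
  (Hcc : c `<=` c') (Hpc' : rb p `<=` c') (Hac' : a `<=` c') (s : {ffun c' -> K}) :
  eq_rect _ P (rep_at Hpc Hac (restr Hcc s)) _ (restr_trans Hac Hcc Hac' s)
  = rep_at Hpc' Hac' s.
Proof. by apply: rf_cast; apply: restr_trans. Qed.

Lemma rep_at_congr (p p' : rep M) c (Hpc : rb p `<=` c) (Hp'c : rb p' `<=` c)
  (Hac : a `<=` c) s : p = p' -> rep_at Hpc Hac s = rep_at Hp'c Hac s.
Proof. by move=> ep; case: p' / ep Hp'c => Hp'c; rewrite (bool_irrelevance Hpc Hp'c). Qed.

Lemma rep_at_Rep c (Hac : a `<=` c) (g : forall s : {ffun c -> K}, M (restr Hac s))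
  (Hcc : c `<=` c) s : rep_at (p := Rep g) Hcc Hac s = g s.
Proof.
exact: (@rf_cast (Rep g) _ _ _ _ (restr_trans Hac Hcc Hac s) erefl erefl (restr_id Hcc s)).
Qed.

Lemma coherent_rep_at (J : Type) (ps : J -> rep M) (Phi : forall t, (J -> P t) -> Prop)
  c c' (Hcc : c `<=` c') (Hac : a `<=` c) (Hic : forall j, rb (ps j) `<=` c)
  (Hac' : a `<=` c') (Hic' : forall j, rb (ps j) `<=` c') :
  E c (fun s => Phi (restr Hac s) (fun j => rep_at (Hic j) Hac s)) <->
  E c' (fun s => Phi (restr Hac' s) (fun j => rep_at (Hic' j) Hac' s)).
Proof.
apply: iff_trans (Hcoh Hcc _) _; apply: (uf_ae_iff (HE _) (uf_setT (HE _))) => s _.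
rewrite -(eq_rect_fun_iff Phi (restr_trans Hac Hcc Hac' s)).
suff -> : (fun j => eq_rect _ P (rep_at (Hic j) Hac (restr Hcc s)) _
   (restr_trans Hac Hcc Hac' s)) = (fun j => rep_at (Hic' j) Hac' s) by [].
by apply: functional_extensionality => j; apply: rep_at_restr.
Qed.

Lemma rep_eqE (p q : rep M) c (Hpc : rb p `<=` c) (Hqc : rb q `<=` c) (Hac : a `<=` c) :
  rep_eq E p q <-> E c (fun s => rep_at Hpc Hac s = rep_at Hqc Hac s).
Proof.
pose pq (b : bool) := if b then p else q.
pose Phi t (v : bool -> P t) := v true = v false.
pose c' := (rb p `|` rb q) `|` c.
have Hc' : c `<=` c' by apply: fsubsetUr.
have Hac' : a `<=` c' by apply: fsubset_trans Hac Hc'.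
have Hpqc' b : rb (pq b) `<=` c' by case: b; apply: fsubset_trans Hc'.
pose Hpq b := match b return rb (pq b) `<=` rb p `|` rb q with
  | true => fsubsetUl (rb p) (rb q) | false => fsubsetUr (rb p) (rb q) end.
pose Hpqc b := match b return rb (pq b) `<=` c with true => Hpc | false => Hqc end.
apply: iff_trans
  (coherent_rep_at Phi (fsubsetUl _ c) (sub_Ul (rb q) (rsub p)) Hpq Hac' Hpqc') _.
exact: iff_sym (coherent_rep_at Phi Hc' Hac Hpqc Hac' Hpqc').
Qed.

Lemma rep_eq_refl (p : rep M) : rep_eq E p p.
Proof. by apply: (uf_mono (HE _) (uf_setT (HE _))) => s _; apply: rep_at_congr. Qed.

Lemma rep_eq_sym (p q : rep M) : rep_eq E p q -> rep_eq E q p.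
Proof.
have Hp : rb p `<=` rb p `|` rb q by apply: fsubsetUl.
have Hq : rb q `<=` rb p `|` rb q by apply: fsubsetUr.
have Ha : a `<=` rb p `|` rb q by apply: fsubset_trans (rsub p) Hp.
rewrite (rep_eqE Hp Hq Ha) (rep_eqE Hq Hp Ha).
by move/(uf_mono (HE _)); apply=> s ->.
Qed.

Lemma rep_eq_trans (p q r : rep M) : rep_eq E p q -> rep_eq E q r -> rep_eq E p r.
Proof.
pose c := rb p `|` rb q `|` rb r.
have Hp : rb p `<=` c by apply: fsubset_trans (fsubsetUl _ (rb q)) (fsubsetUl _ _).
have Hq : rb q `<=` c by apply: fsubset_trans (fsubsetUr (rb p) _) (fsubsetUl _ _).
have Hr : rb r `<=` c by apply: fsubsetUr.
have Ha : a `<=` c by apply: fsubset_trans (rsub p) Hp.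
rewrite (rep_eqE Hp Hq Ha) (rep_eqE Hq Hr Ha) (rep_eqE Hp Hr Ha) => Hpq Hqr.
by apply: (uf_mono (HE _) (uf_and (HE _) Hpq Hqr)) => s [-> ->].
Qed.

Lemma cls_eq (p q : rep M) : cls E p = cls E q <-> rep_eq E p q.
Proof.
split=> [/(f_equal (@proj1_sig _ _)) /= epq | Hpq].
  by apply: rep_eq_sym; rewrite -epq; apply: rep_eq_refl.
apply: eq_sig_hprop => [C|]; first exact: proof_irrelevance.
apply: functional_extensionality => r; apply: propositional_extensionality.
by split; [apply: rep_eq_trans; apply: rep_eq_sym | apply: rep_eq_trans].
Qed.

Lemma cls_crepr (C : ultra_car E M) : cls E (crepr C) = C.
Proof.
case: C => C HC; rewrite /crepr /cls /=.
case: (constructive_indefinite_description _ HC) => p /= eC.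
by apply: eq_sig_hprop => [C'|]; [apply: proof_irrelevance | rewrite /= eC].
Qed.

Lemma ae_cls_eq (p q : rep M) c (Hpc : rb p `<=` c) (Hqc : rb q `<=` c) (Hac : a `<=` c) :
  cls E p = cls E q -> E c (fun s => rep_at Hpc Hac s = rep_at Hqc Hac s).
Proof. by move/cls_eq/(rep_eqE Hpc Hqc Hac). Qed.

Definition app_rep (f : F) (qs : 'I_(far f) -> rep M) : rep M :=
  @Rep L K F far R rar a M (big_dom qs) (fsubsetUl _ _)
    (fun s => funs (M (restr (fsubsetUl _ _) s)) f
       (fun j => rep_at (sub_big a (fun i => rb (qs i)) j) (fsubsetUl _ _) s)).

Lemma rep_at_app_rep f (qs : 'I_(far f) -> rep M) c (HQc : big_dom qs `<=` c)
  (Hac : a `<=` c) (Hqc : forall j, rb (qs j) `<=` c) s :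
  rep_at (p := app_rep qs) HQc Hac s
  = funs (M (restr Hac s)) f (fun j => rep_at (Hqc j) Hac s).
Proof.
rewrite {1}/rep_at /= (eq_rect_fun_op (fun t => funs (M t) f)); congr (funs _ f _).
by apply: functional_extensionality => j; apply: rep_at_restr.
Qed.

Lemma ae_eval_term n (ps : 'I_n -> rep M) (t : term far n) (q : rep M) c
    (Hac : a `<=` c) (Hic : forall i, rb (ps i) `<=` c) (Hqc : rb q `<=` c) :
  cls E q = eval_term (M := UP) (fun i => cls E (ps i)) t ->
  E c (fun s => rep_at Hqc Hac s = eval_term (fun i => rep_at (Hic i) Hac s) t).
Proof.
elim: t q c Hac Hic Hqc => [i | f ts IH] q c Hac Hic Hqc Hq; first exact: ae_cls_eq.
pose qs j := crepr (eval_term (M := UP) (fun i => cls E (ps i)) (ts j)).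
pose c' := c `|` big_dom qs.
have HQc' : big_dom qs `<=` c' by apply: fsubsetUr.
have Hac' : a `<=` c' := sub_Ul _ Hac.
have Hic' i : rb (ps i) `<=` c' := sub_Ul _ (Hic i).
have Hqsc' j : rb (qs j) `<=` c' := fsubset_trans (sub_big a _ j) HQc'.
pose qps o := if o is Some i then ps i else q.
pose Phi t (v : option 'I_n -> P t) :=
  v None = eval_term (M := M t) (fun i => v (Some i)) (App ts).
pose Hqpsc o := match o return rb (qps o) `<=` c with Some i => Hic i | None => Hqc end.
have Hqpsc' o : rb (qps o) `<=` c' by case: o => [i|]; [apply: Hic' | apply: sub_Ul].
apply: (coherent_rep_at Phi (fsubsetUl _ _) Hac Hqpsc Hac' Hqpsc').2.
have Hq_app :
    E c' (fun s => rep_at (Hqpsc' None) Hac' s = rep_at (p := app_rep qs) HQc' Hac' s).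
  by apply: ae_cls_eq; rewrite Hq.
have Hqs : E c' (fun s => forall j, rep_at (Hqsc' j) Hac' s =
    eval_term (fun i => rep_at (Hic' i) Hac' s) (ts j)).
  by apply: (uf_forall_fin (HE _)) => j; apply: IH; apply: cls_crepr.
apply: (uf_mono (HE _) (uf_and (HE _) Hq_app Hqs)) => s [eq_q {}Hqs].
rewrite /Phi /= eq_q rep_at_app_rep; congr (funs _ f _); apply: functional_extensionality => j.
by rewrite Hqs; congr eval_term; apply: functional_extensionality => i; apply: rep_at_congr.
Qed.

Lemma scons_sub n (q : rep M) (ps : 'I_n -> rep M) c : rb q `<=` c ->
  (forall i, rb (ps i) `<=` c) -> forall i, rb (scons q ps i) `<=` c.
Proof. by move=> Hq Hps i; rewrite /scons; case: unlift. Qed.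

Lemma rep_at_scons n (q : rep M) (ps : 'I_n -> rep M) c (Hac : a `<=` c)
  (Hqpsc : forall i, rb (scons q ps i) `<=` c) (Hqc : rb q `<=` c)
  (Hpsc : forall i, rb (ps i) `<=` c) s :
  (fun i => rep_at (Hqpsc i) Hac s)
  = scons (rep_at Hqc Hac s) (fun i => rep_at (Hpsc i) Hac s).
Proof.
apply: functional_extensionality => i; move: (Hqpsc i); rewrite /scons.
by case: (unlift ord0 i) => [j|] H; apply: rep_at_congr.
Qed.

Lemma rep_at_restr_dom (A : nat -> {fset L}) (h : {x : L | exists m, x \in A m} -> K)
  (p : rep M) n m (Hpn : rb p `<=` A n) (Han : a `<=` A n) (Hpm : rb p `<=` A m)
  (Ham : a `<=` A m) (e : restr Han (restr_dom n h) = restr Ham (restr_dom m h)) :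
  eq_rect _ P (rep_at Hpn Han (restr_dom n h)) _ e = rep_at Hpm Ham (restr_dom m h).
Proof. by apply: rf_cast; apply: restr_dom_restr. Qed.

(* Łoś at an arbitrary common support [c] of the parameters: the induction
   needs to pass to larger supports. *)
Definition los_at n (phi : form K far rar n) : Prop :=
  forall (ps : 'I_n -> rep M) c (Hac : a `<=` c) (Hic : forall i, rb (ps i) `<=` c),
  sat (M := UP) phi (fun i => cls E (ps i)) <->
  E c (fun s => sat (M := M (restr Hac s)) phi (fun i => rep_at (Hic i) Hac s)).

Lemma los_eq n (t1 t2 : term far n) : los_at (FEq K rar t1 t2).
Proof.
move=> ps c Hac Hic.
pose q1 := crepr (eval_term (M := UP) (fun i => cls E (ps i)) t1).
pose q2 := crepr (eval_term (M := UP) (fun i => cls E (ps i)) t2).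
have e1 : cls E q1 = eval_term (M := UP) (fun i => cls E (ps i)) t1 := cls_crepr _.
have e2 : cls E q2 = eval_term (M := UP) (fun i => cls E (ps i)) t2 := cls_crepr _.
pose c' := c `|` (rb q1 `|` rb q2).
have Hq1c' : rb q1 `<=` c' by apply: fsubset_trans (fsubsetUl _ _) (fsubsetUr _ _).
have Hq2c' : rb q2 `<=` c' by apply: fsubset_trans (fsubsetUr _ _) (fsubsetUr _ _).
have Hac' : a `<=` c' := sub_Ul _ Hac.
have Hic' i : rb (ps i) `<=` c' := sub_Ul _ (Hic i).
rewrite /= -e1 -e2 cls_eq (rep_eqE Hq1c' Hq2c' Hac').
pose Phi t (v : 'I_n -> P t) := eval_term (M := M t) v t1 = eval_term v t2.
apply: iff_trans _ (iff_sym (coherent_rep_at Phi (fsubsetUl _ _) Hac Hic Hac' Hic')).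
have T1 := ae_eval_term Hac' Hic' Hq1c' e1.
have T2 := ae_eval_term Hac' Hic' Hq2c' e2.
by apply: (uf_ae_iff (HE _) (uf_and (HE _) T1 T2)) => s [-> ->].
Qed.

Lemma los_rel n r (ts : 'I_(rar r) -> term far n) : los_at (FRel K ts).
Proof.
move=> ps c Hac Hic.
pose qs j := crepr (eval_term (M := UP) (fun i => cls E (ps i)) (ts j)).
pose c' := c `|` big_dom qs.
have HQc' : big_dom qs `<=` c' by apply: fsubsetUr.
have Hac' : a `<=` c' := sub_Ul _ Hac.
have Hic' i : rb (ps i) `<=` c' := sub_Ul _ (Hic i).
have Hqsc' j : rb (qs j) `<=` c' := fsubset_trans (sub_big a _ j) HQc'.
pose PhiR t (v : 'I_(rar r) -> P t) := rels (M t) r v.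
apply: iff_trans
  (coherent_rep_at PhiR HQc' (fsubsetUl _ _) (sub_big a (fun i => rb (qs i))) Hac' Hqsc') _.
pose Phi t (v : 'I_n -> P t) := rels (M t) r (fun j => eval_term v (ts j)).
apply: iff_trans _ (iff_sym (coherent_rep_at Phi (fsubsetUl _ _) Hac Hic Hac' Hic')).
have Hqs : E c' (fun s => forall j, rep_at (Hqsc' j) Hac' s =
    eval_term (fun i => rep_at (Hic' i) Hac' s) (ts j)).
  by apply: (uf_forall_fin (HE _)) => j; apply: ae_eval_term; apply: cls_crepr.
apply: (uf_ae_iff (HE _) Hqs) => s Hs.
by rewrite /PhiR /Phi (functional_extensionality _ _ Hs).
Qed.

Lemma los_neg n (psi : form K far rar n) : los_at psi -> los_at (FNeg psi).
Proof. by move=> IH ps c Hac Hic; rewrite /= (IH ps c Hac Hic) (uf_not (HE _)). Qed.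

Lemma los_and n I (HI : card_lt I K) (phis : I -> form K far rar n) :
  (forall i, los_at (phis i)) -> los_at (FAnd HI phis).
Proof.
move=> IH ps c Hac Hic /=; split=> [H | H i].
  by apply: (uf_forall (HE _) HI) => i; apply/IH.
by apply/(IH i ps c Hac Hic); apply: (uf_mono (HE _) H) => s; apply.
Qed.

Hypothesis Minh : forall s, inhabited (M s).

Lemma los_ex n (psi : form K far rar n.+1) : los_at psi -> los_at (FEx psi).
Proof.
move=> IH ps c Hac Hic; split=> [[x Hx] | Hae].
  pose q := crepr x; pose c' := c `|` rb q.
  have Hqc' : rb q `<=` c' by apply: fsubsetUr.
  have Hac' : a `<=` c' := sub_Ul _ Hac.
  have Hic' i : rb (ps i) `<=` c' := sub_Ul _ (Hic i).
  have Hqpsc' := scons_sub Hqc' Hic'.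
  have := (IH (scons q ps) c' Hac' Hqpsc').1.
  rewrite (scons_map (cls E (M := M))) cls_crepr => /(_ Hx) Hae.
  pose Phi t (v : 'I_n -> P t) := exists y : M t, sat psi (scons y v).
  apply: (coherent_rep_at Phi (fsubsetUl _ _) Hac Hic Hac' Hic').2.
  apply: (uf_mono (HE _) Hae) => s; rewrite (rep_at_scons Hac' Hqpsc' Hqc' Hic' s) => Hs.
  by exists (rep_at Hqc' Hac' s).
pose g s := epsilon (Minh (restr Hac s))
  (fun y => sat psi (scons y (fun i => rep_at (Hic i) Hac s))).
pose q := @Rep L K F far R rar a M c Hac g.
have Hqc : rb q `<=` c := fsubset_refl c.
have Hqpsc := scons_sub Hqc Hic.
exists (cls E q); rewrite -(scons_map (cls E (M := M))); apply/(IH (scons q ps) c Hac Hqpsc).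
apply: (uf_mono (HE _) Hae) => s Hs.
by rewrite (rep_at_scons Hac Hqpsc Hqc Hic s) rep_at_Rep; apply: epsilon_spec Hs.
Qed.

Lemma ultra_chain_of_ae_chain n (psi : form K far rar n.+2) : los_at psi ->
  forall (ps : 'I_n -> rep M) c (Hac : a `<=` c) (Hic : forall i, rb (ps i) `<=` c),
  E c (fun s => exists ys, chain_for (sat (M := M (restr Hac s)) psi)
                             (fun i => rep_at (Hic i) Hac s) ys) ->
  exists xs, chain_for (sat (M := UP) psi) (fun i => cls E (ps i)) xs.
Proof.
move=> IH ps c Hac Hic Hae.
have inh s : inhabited (nat -> M (restr Hac s)).
  by case: (Minh (restr Hac s)) => y; constructor=> _; apply: y.
pose ys s := epsilon (inh s) (chain_for (sat psi) (fun i => rep_at (Hic i) Hac s)).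
pose q k := @Rep L K F far R rar a M c Hac (fun s => ys s k).
have Hqc k : rb (q k) `<=` c := fsubset_refl c.
exists (fun k => cls E (q k)) => k.
have Hqpsc := scons_sub (Hqc k) Hic.
have Hqqpsc := scons_sub (Hqc k.+1) Hqpsc.
rewrite -!(scons_map (cls E (M := M))); apply/(IH _ c Hac Hqqpsc).
apply: (uf_mono (HE _) Hae) => s Hs.
rewrite (rep_at_scons Hac Hqqpsc (Hqc k.+1) Hqpsc s) (rep_at_scons Hac Hqpsc (Hqc k) Hic s).
by rewrite !rep_at_Rep; apply: (epsilon_spec (inh s) _ Hs).
Qed.

(* All stages restrict to the same point [h|a], so the values of the [q k]
   glue into one sequence there. *)
Lemma chain_of_stagewise (A : nat -> {fset L}) (h : {x : L | exists m, x \in A m} -> K)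
  n (psi : form K far rar n.+2) (ps : 'I_n -> rep M) (q : nat -> rep M)
  (Ha : forall m, a `<=` A m) (Hps : forall m i, rb (ps i) `<=` A m)
  (Hq : forall k, rb (q k) `<=` A k.+1) (Hq' : forall k, rb (q k.+1) `<=` A k.+1) :
  (forall k, sat (M := M (restr (Ha k.+1) (restr_dom k.+1 h))) psi
     (scons (rep_at (Hq' k) (Ha k.+1) (restr_dom k.+1 h))
        (scons (rep_at (Hq k) (Ha k.+1) (restr_dom k.+1 h))
           (fun i => rep_at (Hps k.+1 i) (Ha k.+1) (restr_dom k.+1 h))))) ->
  exists ys, chain_for (sat (M := M (restr (Ha 0) (restr_dom 0 h))) psi)
                       (fun i => rep_at (Hps 0 i) (Ha 0) (restr_dom 0 h)) ys.
Proof.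
move=> Hstep.
have e k : restr (Ha k.+1) (restr_dom k.+1 h) = restr (Ha 0) (restr_dom 0 h).
  exact: restr_dom_restr.
pose ys k := eq_rect _ P (rep_at (Hq k) (Ha k.+1) (restr_dom k.+1 h)) _ (e k).
have ys_next k :
    ys k.+1 = eq_rect _ P (rep_at (Hq' k) (Ha k.+1) (restr_dom k.+1 h)) _ (e k).
  have e' := restr_dom_restr h (Ha k.+1) (Ha k.+2).
  rewrite /ys -(rep_at_restr_dom (Hq' k) (Hq k.+1) e').
  exact: (eq_rect_comp e').
exists ys => k; move: (Hstep k).
rewrite -(eq_rect_fun_iff (fun t v => sat (M := M t) psi v) (e k)).
rewrite !(scons_map (fun y : P (restr (Ha k.+1) (restr_dom k.+1 h)) => eq_rect _ P y _ (e k))).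
suff -> : (fun i => eq_rect _ P (rep_at (Hps k.+1 i) (Ha k.+1) (restr_dom k.+1 h)) _ (e k))
        = (fun i => rep_at (Hps 0 i) (Ha 0) (restr_dom 0 h)) by rewrite -ys_next.
by apply: functional_extensionality => i; apply: rep_at_restr_dom.
Qed.

Hypothesis WF : well_founded_ext E.

Lemma ae_chain_of_ultra_chain n (psi : form K far rar n.+2) : los_at psi ->
  forall (ps : 'I_n -> rep M) c (Hac : a `<=` c) (Hic : forall i, rb (ps i) `<=` c) xs,
  chain_for (sat (M := UP) psi) (fun i => cls E (ps i)) xs ->
  forall Y, E c Y -> exists s, Y s /\
    exists ys, chain_for (sat (M := M (restr Hac s)) psi) (fun i => rep_at (Hic i) Hac s) ys.
Proof.
move=> IH ps c Hac Hic xs Hxs Y HY.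
pose q k := crepr (xs k).
pose A m := if m is k.+1 then c `|` (rb (q k) `|` rb (q k.+1)) else c.
pose Ha m := match m return a `<=` A m with 0 => Hac | k.+1 => sub_Ul _ Hac end.
pose Hps m i := match m return rb (ps i) `<=` A m with
  | 0 => Hic i | k.+1 => sub_Ul _ (Hic i) end.
have Hq k : rb (q k) `<=` A k.+1 by apply: fsubset_trans (fsubsetUl _ _) (fsubsetUr _ _).
have Hq' k : rb (q k.+1) `<=` A k.+1 by apply: fsubset_trans (fsubsetUr _ _) (fsubsetUr _ _).
pose X m := match m return {ffun A m -> K} -> Prop with
  | 0 => Y
  | k.+1 => fun s => sat (M := M (restr (Ha k.+1) s)) psi
      (scons (rep_at (Hq' k) (Ha k.+1) s)
         (scons (rep_at (Hq k) (Ha k.+1) s) (fun i => rep_at (Hps k.+1 i) (Ha k.+1) s)))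
  end.
have HX m : E (A m) (X m).
  case: m => [//|k]; have Hs1 := scons_sub (Hq k) (Hps k.+1).
  have Hs2 := scons_sub (Hq' k) Hs1.
  have := (IH _ _ (Ha k.+1) Hs2).1.
  rewrite !(scons_map (cls E (M := M))) /q !cls_crepr => /(_ (Hxs k)).
  move/(uf_mono (HE _)); apply=> s.
  by rewrite (rep_at_scons _ Hs2 (Hq' k) Hs1) (rep_at_scons _ Hs1 (Hq k) (Hps k.+1)).
have [h Hh] := WF HX.
exists (restr_dom 0 h); split; first exact: Hh 0.
exact: (chain_of_stagewise (fun k => Hh k.+1)).
Qed.

Lemma los_qwf n (psi : form K far rar n.+2) : los_at psi -> los_at (FQWF psi).
Proof.
move=> IH ps c Hac Hic.
change (~ (exists xs, chain_for (sat (M := UP) psi) (fun i => cls E (ps i)) xs) <->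
  E c (fun s => ~ exists ys, chain_for (sat (M := M (restr Hac s)) psi)
                               (fun i => rep_at (Hic i) Hac s) ys)).
split=> [Hno | Hae [xs Hxs]].
  apply: NNPP => /(uf_not (HE c) _).2 Hch; apply: Hno.
  apply: (ultra_chain_of_ae_chain IH (Hac := Hac) (Hic := Hic)).
  by apply: (uf_mono (HE _) Hch) => s /NNPP.
by have [s [Hs Hch]] := ae_chain_of_ultra_chain IH Hac Hic Hxs Hae; apply: Hs.
Qed.

Lemma los_all n (phi : form K far rar n) : los_at phi.
Proof.
elim: phi => {n} [n t1 t2 | n r ts | n psi IH | n I HI phis IH | n psi IH | n psi IH].
- exact: los_eq.
- exact: los_rel.
- exact: los_neg.
- exact: los_and.
- exact: los_ex.
- exact: los_qwf.
Qed.

End ExtenderProduct.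

Section WellFoundedOfLos.
Unset Implicit Arguments.
Variables (L : choiceType) (K : Type) (E : extender_system L K).
Variables (A : nat -> {fset L}) (X : forall n, {ffun A n -> K} -> Prop).
Set Implicit Arguments.
Hypothesis HE : forall b : {fset L}, kcomplete_ultrafilter K (E b).
Hypothesis Hcoh : coherent E.
Hypothesis HX : forall n, E (A n) (X n).

Definition A_upto n : {fset L} := \bigcup_(m <- iota 0 n) A m.

Lemma A_sub_upto m n : (m < n)%N -> A m `<=` A_upto n.
Proof. by move=> Hmn; apply: bigfcup_sup => //; rewrite mem_iota. Qed.

Lemma A_upto_S n : A_upto n `<=` A_upto n.+1.
Proof.
apply/bigfcupsP => m; rewrite mem_iota add0n => /andP [_ Hmn] _.
exact/A_sub_upto/ltnW.
Qed.

Definition approx n (t : {ffun A_upto n -> K}) : Prop :=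
  forall m (Hmn : (m < n)%N), X m (restr (A_sub_upto Hmn) t).

(* [None] is an isolated node, present only to make the tree inhabited. *)
Definition node := option {n : nat & {ffun A_upto n -> K}}.

Definition extends (y x : node) : Prop :=
  if x is Some (existT n t) then
    exists t' : {ffun A_upto n.+1 -> K},
      y = Some (existT _ n.+1 t') /\ approx t' /\ restr (A_upto_S n) t' = t
  else False.

Definition node_val (x : node) (z : L) : option K :=
  if x is Some (existT n t) then omap t (insub z) else None.

Definition level (x : node) : nat := if x is Some (existT n _) then n else 0.

Lemma node_val_extends y x z v :
  extends y x -> node_val x z = Some v -> node_val y z = Some v.
Proof.
case: x => [[n t]|] //= [t' [-> [_ <-]]] /=.
case: insubP => //= u Hu Hz [<-].
rewrite insubT; first exact: (fsubsetP (A_upto_S n)).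
by move=> Hz' /=; rewrite ffunE; congr (Some (t' _)); apply: val_inj.
Qed.

Lemma level_extends y x : extends y x -> level y = (level x).+1.
Proof. by case: x => [[n t]|] //= [t' [-> _]]. Qed.

Section Branch.
Variable ys : nat -> node.
Hypothesis Hys : forall k, extends (ys k.+1) (ys k).

Lemma branch_val_mono d e z v :
  node_val (ys d) z = Some v -> node_val (ys (d + e)) z = Some v.
Proof.
move=> Hd; elim: e => [|e IH]; first by rewrite addn0.
by rewrite addnS; apply: node_val_extends (Hys _) IH.
Qed.

Lemma branch_val_agree d1 d2 z v1 v2 :
  node_val (ys d1) z = Some v1 -> node_val (ys d2) z = Some v2 -> v1 = v2.
Proof.
move=> /(branch_val_mono d2) H1 /(branch_val_mono d1).
by rewrite addnC H1 => -[].
Qed.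

Lemma branch_approx m :
  exists n t, [/\ ys m.+1 = Some (existT _ n t), approx t & (m < n)%N].
Proof.
have level_ys d : (d <= level (ys d))%N.
  by elim: d => [//|d IH]; rewrite (level_extends (Hys d)).
have := Hys m; have := level_ys m.
case: (ys m) => [[n t]|] //= Hmn [t' [-> [Ht' _]]].
by exists n.+1, t'; split=> //; apply: leq_trans Hmn _.
Qed.

Lemma branch_global : exists h, forall n, X n (restr_dom n h).
Proof.
pose W := {x : L | exists m, x \in A m}.
have Hval (w : W) : exists v d, node_val (ys d) (sval w) = Some v.
  case: w => x [m Hxm] /=; have [n [t [Hm _ Hmn]]] := branch_approx m.
  have Hx : x \in A_upto n by apply: (fsubsetP (A_sub_upto Hmn)).
  by exists (t [` Hx]), m.+1; rewrite Hm /= insubT.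
have inhK (w : W) : inhabited K by have [v _] := Hval w; constructor.
pose h w := epsilon (inhK w) (fun v => exists d, node_val (ys d) (sval w) = Some v).
exists h => m; have [n [t [Hm Ht Hmn]]] := branch_approx m.
suff -> : restr_dom m h = restr (A_sub_upto Hmn) t by apply: Ht.
apply/ffunP => x; rewrite !ffunE.
set w := exist _ _ _.
have [d Hd] : exists d, node_val (ys d) (sval w) = Some (h w).
  exact: (epsilon_spec (inhK w) _ (Hval w)).
apply: (branch_val_agree (d2 := m.+1) Hd); rewrite Hm /= insubT /=.
  by apply: (fsubsetP (A_sub_upto Hmn)); apply: valP.
by move=> Hx; congr (Some (t _)); apply: val_inj.
Qed.

End Branch.

Hypothesis Hlos : los_property E.

Definition tree : structure (of_void nat) (fun _ : unit => 2) :=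
  @Structure void (of_void nat) unit (fun _ => 2) node (fun f _ => of_void _ f)
    (fun _ v => extends (v ord0) (v (lift ord0 ord0))).

Definition tree_factor (s : {ffun (fset0 : {fset L}) -> K}) := tree.

Lemma tree_factor_inhabited s : inhabited (tree_factor s).
Proof. exact: inhabits None. Qed.

Definition extends_form : form K (of_void nat) (fun _ : unit => 2) 2 :=
  FRel K (r := tt) (fun j => Var (of_void nat) j).

Definition stage_rep k : rep tree_factor :=
  @Rep L K _ _ _ _ fset0 tree_factor (A_upto k) (fsub0set _)
    (fun s => Some (existT _ k s)).

Lemma stage_chain : chain_for (sat (M := ultraprod E tree_factor) extends_form)
  (fun i : 'I_0 => cls E (stage_rep 0)) (fun k => cls E (stage_rep k)).
Proof.
move=> k; rewrite -!(scons_map (cls E (M := tree_factor))).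
set ps := scons _ _.
apply/(Hlos tree_factor_inhabited extends_form ps).
pose c := big_dom ps.
have Hk1c : rb (stage_rep k.+1) `<=` c.
  by have := sub_big fset0 (fun j => rb (ps j)) ord0; rewrite /ps scons0.
have Hkc : rb (stage_rep k) `<=` c.
  by have := sub_big fset0 (fun j => rb (ps j)) (lift ord0 ord0); rewrite /ps sconsS scons0.
have HAc (j : 'I_k.+1) : A j `<=` c := fsubset_trans (A_sub_upto (ltn_ord j)) Hk1c.
have HXc : E c (fun s => forall j : 'I_k.+1, X j (restr (HAc j) s)).
  by apply: (uf_forall_fin (HE c)) => j; apply/(Hcoh (HAc j)); apply: HX.
apply: (uf_mono (HE c) HXc) => s HXs /=.
rewrite (rep_at_congr _ Hk1c _ _ (scons0 _ _)).
rewrite (rep_at_congr _ Hkc _ _ (etrans (sconsS _ _ _) (scons0 _ _))) /=.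
rewrite /rep_at !rew_const /=.
exists (restr Hk1c s); split=> //; split=> [m Hmk1 | ]; last exact: restr_trans.
by rewrite (restr_trans _ Hk1c (HAc (Ordinal Hmk1))); apply: (HXs (Ordinal Hmk1)).
Qed.

Lemma global_of_los : exists h, forall n, X n (restr_dom n h).
Proof.
pose ps0 (i : 'I_0) := stage_rep 0.
have /(Hlos tree_factor_inhabited (FQWF extends_form) ps0)/(uf_not (HE _) _).2 Hae :
    ~ sat (M := ultraprod E tree_factor) (FQWF extends_form) (fun i => cls E (ps0 i)).
  by apply; exists (fun k => cls E (stage_rep k)); apply: stage_chain.
have : ~ ~ exists ys, forall k, extends (ys k.+1) (ys k).
  apply: (uf_const (HE _)); apply: (uf_mono (HE _) Hae) => s Hs Hno.
  apply: Hs => -[ys Hys]; apply: Hno; exists ys => k.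
  by have := Hys k; rewrite /= sconsS !scons0.
by move/NNPP => [ys Hys]; apply: (branch_global Hys).
Qed.

End WellFoundedOfLos.

Theorem proposition5p3 (L : choiceType) (K : Type) (E : extender_system L K) :
  (forall a : {fset L}, kcomplete_ultrafilter K (E a)) ->
  coherent E ->
  (well_founded_ext E <-> los_property E).
Proof.
move=> HE Hcoh; split=> [WF F far R rar a M Minh n phi ps | Hlos A X HX].
  exact: (los_all HE Hcoh Minh WF phi (fsubsetUl _ _) (sub_big a (fun j => rb (ps j)))).
exact: (global_of_los HE Hcoh HX Hlos).
Qed.
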